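(* Let $f=\frac1{1-X}\in GF(2)[[X]]$, and for $h\in GF(2)[[X]]$ let $\alpha[h]:g\mapsto h+g$ and $\mu[h]:g\mapsto hg$. Let $\Gamma$ be the group of bijections of $GF(2)[[X]]$ generated by the maps $g\mapsto f\cdot(s+g)$, $s\in\{0,1\}$, and let $N$ be the subgroup generated by $\{\alpha[sf^m]\mid s\in GF(2),\ m\in\mathbb{Z}\}$. Then $N$ is a normal subgroup of $\Gamma$.
   Context: Under the identification of $\{0,1\}^\omega$ with $GF(2)[[X]]$ via $(a_k)\mapsto\sum a_kX^k$, $\Gamma$ is the automaton group $\Gamma(\mathcal{M}_2)$ of the two-state Mealy machine over $\{0,1\}$ in which state $s$, reading $r$, outputs $s+r\bmod 2$ and moves to state $s+r\bmod 2$. *)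

From mathcomp Require Import all_boot.
From mathcomp Require Import ssrint.
Set Implicit Arguments. Unset Strict Implicit. Unset Printing Implicit Defensive.

(* GF(2)[[X]] : formal power series over GF(2) = bool (with xorb as addition,
   andb as product), represented by their coefficient sequences. *)
Definition ps := nat -> bool.

Definition ps_add (g h : ps) : ps := fun n => xorb (g n) (h n).
Definition ps_mul (g h : ps) : ps :=
  fun n => \big[xorb/false]_(i < n.+1) (g i && h (n - i)).

Definition ps_const (s : bool) : ps := fun n => if n is 0 then s else false.
Definition ps_one : ps := ps_const true.

(* f = 1/(1-X) = 1 + X + X^2 + ... *)
Definition f : ps := fun _ => true.
(* f^{-1} = 1 - X = 1 + X in GF(2)[[X]] *)
Definition finv : ps := fun n => (n <= 1)%N.

Definition fpow (m : int) : ps :=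
  match m with
  | Posz k => iter k (ps_mul f) ps_one
  | Negz k => iter k.+1 (ps_mul finv) ps_one
  end.

Definition alpha (h : ps) : ps -> ps := fun g => ps_add h g.
Definition mu (h : ps) : ps -> ps := fun g => ps_mul h g.

Inductive gen_group {T : Type} (S : (T -> T) -> Prop) : (T -> T) -> Prop :=
| gen_id : gen_group S id
| gen_comp s g : S s -> gen_group S g -> gen_group S (s \o g)
| gen_comp_inv s s' g : S s -> cancel s s' -> cancel s' s ->
    gen_group S g -> gen_group S (s' \o g).

Definition Gamma_gens (t : ps -> ps) : Prop :=
  exists s : bool, t = fun g => ps_mul f (ps_add (ps_const s) g).
Definition Gamma := gen_group Gamma_gens.

Definition N_gens (t : ps -> ps) : Prop :=
  exists (s : bool) (m : int), t = alpha (ps_mul (ps_const s) (fpow m)).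
Definition N := gen_group N_gens.

Definition normal_subgroup {T : Type} (H G : (T -> T) -> Prop) : Prop :=
  (forall h, H h -> G h) /\
  (forall g g', G g -> cancel g g' -> cancel g' g ->
     forall h, H h -> H (g \o h \o g')).

(** The generators [tau b : g |-> f (b + g)] are affine maps of GF(2)[[X]]
    with linear part multiplication by [f], so conjugating a translation
    [alpha[c]] by [tau b] (resp. by its inverse) yields [alpha[f c]]
    (resp. [alpha[f^-1 c]]).  Every element of [N] is a translation [alpha[c]]
    with [c] in the additive span of the powers [f^m], and this span is stable
    under multiplication by [f] and [f^-1].  Hence [N] is stable under
    conjugation by the generators of [Gamma], which suffices for normality.
    Finally [N] lies in [Gamma]: [alpha[1] = tau_0^-1 tau_1], and conjugating by
    [tau_0^{+-1}] yields every [alpha[f^m]]. *)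

From mathcomp Require Import all_boot ssralg ssrint.
From Stdlib Require Import FunctionalExtensionality.

Set Implicit Arguments. Unset Strict Implicit. Unset Printing Implicit Defensive.

Lemma cancel_inv_eq (T : Type) (g g1 g2 : T -> T) :
  cancel g g1 -> cancel g2 g -> g1 = g2.
Proof.
by move=> gK g2K; apply: functional_extensionality => x; rewrite -{1}(g2K x) gK.
Qed.

Section GeneratedGroup.

Variables (T : Type) (S : (T -> T) -> Prop).

Lemma gen_group_comp g h : gen_group S g -> gen_group S h -> gen_group S (g \o h).
Proof.
move=> Gg Gh; elim: Gg => [//|s g' Ss _ IH|s s' g' Ss sK s'K _ IH].
- exact: gen_comp Ss IH.
- exact: gen_comp_inv Ss sK s'K IH.
Qed.

Lemma gen_group_gen s : S s -> gen_group S s.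
Proof. by move=> Ss; apply: (gen_comp Ss (gen_id S)). Qed.

Lemma gen_group_gen_inv s s' : S s -> cancel s s' -> cancel s' s -> gen_group S s'.
Proof. by move=> Ss sK s'K; apply: (gen_comp_inv Ss sK s'K (gen_id S)). Qed.

Definition normalizes (H : (T -> T) -> Prop) (g : T -> T) : Prop :=
  forall g', cancel g g' -> cancel g' g -> forall h, H h -> H (g \o h \o g').

Lemma normalizes_id H : normalizes H id.
Proof.
move=> g' _ g'K h Hh.
have -> : id \o h \o g' = h.
  by apply: functional_extensionality => x /=; rewrite -{2}(g'K x).
exact: Hh.
Qed.

Lemma normalizes_comp H a a' g :
  cancel a a' -> cancel a' a -> (forall h, H h -> H (a \o h \o a')) ->
  normalizes H g -> normalizes H (a \o g).
Proof.
move=> aK a'K Ha Hg g' agK g'K h Hh.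
have gK : cancel g (g' \o a) by move=> x; apply: agK.
have g'aK : cancel (g' \o a) g by move=> y; apply: (can_inj aK); apply: g'K.
have -> : (a \o g) \o h \o g' = a \o (g \o h \o (g' \o a)) \o a'.
  by apply: functional_extensionality => x /=; rewrite a'K.
exact: Ha (Hg _ gK g'aK _ Hh).
Qed.

Lemma gen_group_normal H :
  (forall h, H h -> gen_group S h) ->
  (forall s, S s -> exists s', [/\ cancel s s', cancel s' s &
     forall h, H h -> H (s \o h \o s') /\ H (s' \o h \o s)]) ->
  normal_subgroup H (gen_group S).
Proof.
move=> HsubG Hconj; split=> // g g' Gg; move: g'; apply: (_ : normalizes H g).
elim: Gg => [|s g0 Ss _ IH|s s' g0 Ss sK s'K _ IH]; first exact: normalizes_id.
- have [s' [sK s'K Hs]] := Hconj s Ss.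
  by apply: normalizes_comp sK s'K _ IH => h /Hs [].
- have [s'' [sK' _ Hs]] := Hconj s Ss.
  rewrite (cancel_inv_eq sK' s'K) in Hs.
  by apply: normalizes_comp s'K sK _ IH => h /Hs [].
Qed.

End GeneratedGroup.

Notation ps0 := (ps_const false).

Lemma ps0E n : ps0 n = false.
Proof. by case: n. Qed.

Lemma psE (g h : ps) : g =1 h -> g = h.
Proof. exact: functional_extensionality. Qed.

Lemma xorbE : xorb = addb.
Proof.
apply: functional_extensionality => a; apply: functional_extensionality => b.
by case: a; case: b.
Qed.

Lemma ps_addA : associative ps_add.
Proof. by move=> g h k; apply: psE => n; rewrite /ps_add xorbE addbA. Qed.

Lemma ps_addCA : left_commutative ps_add.
Proof. by move=> g h k; apply: psE => n; rewrite /ps_add xorbE addbCA. Qed.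

Lemma ps_addK g : cancel (ps_add g) (ps_add g).
Proof. by move=> h; apply: psE => n; rewrite /ps_add xorbE addKb. Qed.

Lemma ps_add0 : left_id ps0 ps_add.
Proof. by move=> g; apply: psE => -[|n]. Qed.

Lemma ps_mulDr : right_distributive ps_mul ps_add.
Proof.
move=> u g h; apply: psE => n; rewrite /ps_mul /ps_add xorbE -big_split /=.
by apply: eq_bigr => i _; rewrite andb_addr.
Qed.

Lemma ps_mulr0 u : ps_mul u ps0 = ps0.
Proof.
by apply: psE => n; rewrite /ps_mul xorbE big1 ?ps0E // => i _; rewrite ps0E andbF.
Qed.

Lemma ps_mul_const b g : ps_mul (ps_const b) g = if b then g else ps0.
Proof.
apply: psE => n; rewrite /ps_mul xorbE big_ord_recl subn0 big1 ?addbF //.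
by case: b; case: n.
Qed.

Lemma ps_mul_0 u g : ps_mul u g 0 = u 0 && g 0.
Proof. by rewrite /ps_mul xorbE big_ord1. Qed.

(* [f] is the partial-sum operator and [finv] the difference operator. *)
Lemma ps_mul_f_S g n : ps_mul f g n.+1 = xorb (g n.+1) (ps_mul f g n).
Proof. by rewrite /ps_mul big_ord_recl subn0. Qed.

Lemma ps_mul_finv_S g n : ps_mul finv g n.+1 = xorb (g n.+1) (g n).
Proof.
rewrite /ps_mul !xorbE big_ord_recl big_ord_recl big1 // subn0 /= subSS subn0.
by rewrite addbF.
Qed.

Lemma ps_mul_finvK : cancel (ps_mul finv) (ps_mul f).
Proof.
move=> g; apply: psE; elim=> [|n IH]; first by rewrite !ps_mul_0.
by rewrite ps_mul_f_S IH ps_mul_finv_S xorbE addbK.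
Qed.

Lemma ps_mul_fK : cancel (ps_mul f) (ps_mul finv).
Proof.
move=> g; apply: psE => -[|n]; first by rewrite !ps_mul_0.
by rewrite ps_mul_finv_S ps_mul_f_S xorbE addbK.
Qed.

Lemma fpowS m : ps_mul f (fpow m) = fpow (m + 1)%R.
Proof. by case: m => [k|[|k]] /=; rewrite ?addn1 ?ps_mul_finvK ?subn1. Qed.

Lemma fpowN m : ps_mul finv (fpow m) = fpow (m - 1)%R.
Proof. by case: m => [[|k]|k] /=; rewrite ?ps_mul_fK ?subn1 ?addn0. Qed.

Lemma alpha0 : alpha ps0 = id.
Proof. by apply: functional_extensionality; apply: ps_add0. Qed.

Lemma alphaD g h : alpha g \o alpha h = alpha (ps_add g h).
Proof. by apply: functional_extensionality => k; rewrite /= /alpha ps_addA. Qed.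

Lemma alphaK g : cancel (alpha g) (alpha g).
Proof. exact: ps_addK. Qed.

Definition tau (b : bool) : ps -> ps := fun g => ps_mul f (ps_add (ps_const b) g).
Definition tau_inv (b : bool) : ps -> ps :=
  fun g => ps_add (ps_const b) (ps_mul finv g).

Lemma tauK b : cancel (tau b) (tau_inv b).
Proof. by move=> g; rewrite /tau /tau_inv ps_mul_fK ps_addK. Qed.

Lemma tau_invK b : cancel (tau_inv b) (tau b).
Proof. by move=> g; rewrite /tau /tau_inv ps_addK ps_mul_finvK. Qed.

Lemma tau_conj b c : tau b \o alpha c \o tau_inv b = alpha (ps_mul f c).
Proof.
apply: functional_extensionality => g.
by rewrite /= /tau /tau_inv /alpha ps_addCA ps_addK ps_mulDr ps_mul_finvK.
Qed.

Lemma tau_inv_conj b c : tau_inv b \o alpha c \o tau b = alpha (ps_mul finv c).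
Proof.
apply: functional_extensionality => g.
by rewrite /= /tau /tau_inv /alpha ps_mulDr ps_mul_fK ps_addCA ps_addK.
Qed.

Lemma tau_alpha b : tau b = tau false \o alpha (ps_const b).
Proof. by apply: functional_extensionality => g; rewrite /= /tau ps_add0. Qed.

Definition N_vec (v : ps) : Prop := exists b m, v = ps_mul (ps_const b) (fpow m).

Lemma N_vec_gen v : N_vec v -> N_gens (alpha v).
Proof. by case=> b [m ->]; exists b, m. Qed.

Lemma N_vec_mul_f v : N_vec v -> N_vec (ps_mul f v).
Proof.
case=> b [m ->]; exists b, (m + 1)%R; rewrite !ps_mul_const.
by case: b; rewrite ?fpowS ?ps_mulr0.
Qed.

Lemma N_vec_mul_finv v : N_vec v -> N_vec (ps_mul finv v).
Proof.
case=> b [m ->]; exists b, (m - 1)%R; rewrite !ps_mul_const.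
by case: b; rewrite ?fpowN ?ps_mulr0.
Qed.

(* The generators of [N] are involutions, so [gen_comp_inv] adds nothing. *)
Lemma N_ind (P : (ps -> ps) -> Prop) :
  P id -> (forall v g, N_vec v -> N g -> P g -> P (alpha v \o g)) ->
  forall h, N h -> P h.
Proof.
move=> Pid Pcomp h; elim=> [//|s g [b [m ->]] Ng Pg|s s' g [b [m ->]] sK _ Ng Pg].
- by apply: Pcomp => //; exists b, m.
- by rewrite (cancel_inv_eq sK (alphaK _)); apply: Pcomp => //; exists b, m.
Qed.

Lemma N_alphaE h : N h -> h = alpha (h ps0).
Proof.
move: h; apply: N_ind => [|v g _ _ Eg]; first by rewrite /= alpha0.
by rewrite {1}Eg alphaD.
Qed.

Lemma N_alpha_mul u :
  (forall v, N_vec v -> N_vec (ps_mul u v)) ->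
  forall h, N h -> N (alpha (ps_mul u (h ps0))).
Proof.
move=> Hu; apply: N_ind => [|v g Nv _ IH].
  by rewrite ps_mulr0 alpha0; apply: gen_id.
rewrite /= {2}/alpha ps_mulDr -alphaD.
exact: gen_comp (N_vec_gen (Hu _ Nv)) IH.
Qed.

Lemma N_tau_conj b h : N h -> N (tau b \o h \o tau_inv b).
Proof.
by move=> Nh; rewrite (N_alphaE Nh) tau_conj; apply: N_alpha_mul N_vec_mul_f _ Nh.
Qed.

Lemma N_tau_inv_conj b h : N h -> N (tau_inv b \o h \o tau b).
Proof.
by move=> Nh; rewrite (N_alphaE Nh) tau_inv_conj; apply: N_alpha_mul N_vec_mul_finv _ Nh.
Qed.

Lemma Gamma_tau b : Gamma (tau b).
Proof. by apply: gen_group_gen; exists b. Qed.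

Lemma Gamma_tau_inv b : Gamma (tau_inv b).
Proof. by apply: (gen_group_gen_inv _ (@tauK b) (@tau_invK b)); exists b. Qed.

Lemma Gamma_alpha_mul_f c : Gamma (alpha c) -> Gamma (alpha (ps_mul f c)).
Proof.
move=> Gc; rewrite -(tau_conj false).
by apply: gen_group_comp (Gamma_tau_inv _); apply: gen_group_comp (Gamma_tau _) Gc.
Qed.

Lemma Gamma_alpha_mul_finv c : Gamma (alpha c) -> Gamma (alpha (ps_mul finv c)).
Proof.
move=> Gc; rewrite -(tau_inv_conj false).
by apply: gen_group_comp (Gamma_tau _); apply: gen_group_comp (Gamma_tau_inv _) Gc.
Qed.

Lemma Gamma_alpha_one : Gamma (alpha ps_one).
Proof.
have -> : alpha ps_one = tau_inv false \o tau true.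
  by apply: functional_extensionality => g; rewrite /= tau_alpha /= tauK.
exact: gen_group_comp (Gamma_tau_inv _) (Gamma_tau _).
Qed.

Lemma Gamma_alpha_fpow m : Gamma (alpha (fpow m)).
Proof.
case: m => k; elim: k => [|k IH].
- exact: Gamma_alpha_one.
- exact: Gamma_alpha_mul_f.
- exact: Gamma_alpha_mul_finv Gamma_alpha_one.
- exact: Gamma_alpha_mul_finv.
Qed.

Lemma N_sub_Gamma h : N h -> Gamma h.
Proof.
move: h; apply: N_ind => [|v g [b [m ->]] _ Gg]; first exact: gen_id.
apply: gen_group_comp Gg; rewrite ps_mul_const.
by case: b; [apply: Gamma_alpha_fpow | rewrite alpha0; apply: gen_id].
Qed.

Theorem proposition8p11 : normal_subgroup N Gamma.
Proof.
apply: gen_group_normal => [h|s [b ->]]; first exact: N_sub_Gamma.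
exists (tau_inv b); split; [exact: tauK | exact: tau_invK |].
by move=> h Nh; split; [apply: N_tau_conj | apply: N_tau_inv_conj].
Qed.
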